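(* Let $G=(V,E)$ be a graph with edge set partitioned into color classes $E_1,\dots,E_k$, all color bounds equal to $1$, and consider the natural LP relaxation $\mathcal{M}_c=\{x\in[0,1]^E:\ \sum_{e\in\delta(v)}x_e\le 1\ \forall v\in V,\ \sum_{e\in E_j}x_e\le 1\ \forall j\}$. Then after 2 rounds of the Sherali–Adams hierarchy applied to $\mathcal{M}_c$, every bi-chromatic constraint is implied: every $x\in F_2$ satisfies $\sum_{e\in BC}x_e\le 1$ for every bi-chromatic 4-cycle $BC$ of $G$.
   Context: A bi-chromatic 4-cycle is a cycle $e_1,e_3,e_2,e_4$ of length 4 in $G$ whose edges alternate between two color classes (two opposite edges $e_1,e_2$ in one class, the other two $e_3,e_4$ in another class). $\delta(v)$ is the set of edges incident to $v$. Sherali–Adams hierarchy: for $F_0=\{x\in[0,1]^n: a_i^Tx\le b_i\}$ (box constraints $x_j\ge0$, $1-x_j\ge0$ included), the level-$\psi$ lifted system has variables $y_Z$, $Z\subseteq[n]$, $y_\emptyset=1$, and for all disjoint $\Gamma,\Delta\subseteq[n]$ with $|\Gamma|+|\Delta|\le\psi$ the constraints $\sum_{H\subseteq\Delta}(-1)^{|H|}(b_i y_{\Gamma\cup H}-\sum_j a_{ij}y_{\Gamma\cup H\cup\{j\}})\ge0$ for each $i$ and $\sum_{H\subseteq\Delta}(-1)^{|H|}y_{\Gamma\cup H}\ge 0$ (linearizations of products of constraints with $\prod_{\gamma\in\Gamma}x_\gamma\prod_{\delta\in\Delta}(1-x_\delta)$, using $x_i^2=x_i$ and $\prod_{\zeta\in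 Z}x_\zeta\mapsto y_Z$); $F_\psi$ is the projection onto $y_{\{i\}}=x_i$. *)

From mathcomp Require Import all_boot all_order all_algebra.
Set Implicit Arguments. Unset Strict Implicit. Unset Printing Implicit Defensive.
Import Order.TTheory GRing.Theory Num.Theory.
Local Open Scope ring_scope.

(* Generic Sherali-Adams lifting of F_0 = { x : A_i . x <= b_i  (i : I) },
   where the rows (I, A, b) already include the box constraints.
   Variables y_Z for Z : {set n}. *)
Definition SA_lifted (R : realFieldType) (n I : finType)
  (A : I -> n -> R) (b : I -> R) (psi : nat) (y : {set n} -> R) : Prop :=
  y set0 = 1 /\
  forall Gam Del : {set n}, [disjoint Gam & Del] -> (#|Gam| + #|Del| <= psi)%N ->
    (forall i : I,
        0 <= \sum_(H in powerset Del) (-1) ^+ #|H| *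
               (b i * y (Gam :|: H) - \sum_(j : n) A i j * y (Gam :|: H :|: [set j])))
    /\ 0 <= \sum_(H in powerset Del) (-1) ^+ #|H| * y (Gam :|: H).

Definition SA_level (R : realFieldType) (n I : finType)
  (A : I -> n -> R) (b : I -> R) (psi : nat) (x : n -> R) : Prop :=
  exists y : {set n} -> R, SA_lifted A b psi y /\ forall j : n, x j = y [set j].

(* Graph: vertex type V, edge type E, ends e = set of the two endpoints of e;
   edge colouring col : E -> 'I_k (colour classes E_1..E_k). *)

(* Rows of M_c: degree constraints (v : V), colour constraints (c : 'I_k),
   and box constraints -x_e <= 0 and x_e <= 1 (e : E). *)
Definition Mc_A (R : realFieldType) (V E : finType) (k : nat)
  (ends : E -> {set V}) (col : E -> 'I_k)
  (i : (V + 'I_k) + (E + E)) (j : E) : R :=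
  match i with
  | inl (inl v) => if v \in ends j then 1 else 0
  | inl (inr c) => if col j == c then 1 else 0
  | inr (inl e) => if j == e then -1 else 0
  | inr (inr e) => if j == e then 1 else 0
  end.

Definition Mc_b (R : realFieldType) (V E : finType) (k : nat)
  (i : (V + 'I_k) + (E + E)) : R :=
  match i with
  | inl _ => 1
  | inr (inl _) => 0
  | inr (inr _) => 1
  end.

Definition bichromatic_4cycle (V E : finType) (k : nat)
  (ends : E -> {set V}) (col : E -> 'I_k) (e1 e3 e2 e4 : E) : Prop :=
  exists v1 v2 v3 v4 : V,
    [/\ uniq [:: v1; v2; v3; v4],
        ends e1 = [set v1; v2], ends e3 = [set v2; v3],
        ends e2 = [set v3; v4] & ends e4 = [set v4; v1]]
    /\ [/\ col e1 = col e2, col e3 = col e4 & col e1 != col e3].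

From mathcomp Require Import all_boot all_order all_algebra.
From mathcomp Require Import lra.
Set Implicit Arguments. Unset Strict Implicit. Unset Printing Implicit Defensive.
Import Order.TTheory GRing.Theory Num.Theory.
Local Open Scope ring_scope.

(* Lift the colour constraint of the class of e1, e2 by (1 - x_e3)(1 - x_e4).
   In the lifted inequality every edge e of that class contributes the
   linearisation of x_e (1 - x_e3)(1 - x_e4), which is nonnegative, and for
   e = e1, e2 it is at least y_{e}: the products x_e x_e3 and x_e x_e4 vanish
   because e shares a vertex with e3 and with e4 (a lifted degree constraint
   forces y_{e,f} <= 0 for adjacent e, f), while y_{e,e3,e4} >= 0.  Hence
   x_e1 + x_e2 <= 1 - x_e3 - x_e4 + y_{e3,e4}, and y_{e3,e4} <= 0 since e3, e4
   share a colour. *)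

Lemma powerset_set2 (T : finType) (a b : T) :
  powerset [set a; b] = [set set0; [set a]; [set b]; [set a; b]].
Proof.
apply/setP => H; rewrite powersetE !inE; apply/idP/idP => [sHab|]; last first.
  by rewrite -!orbA => /or4P [] /eqP ->; rewrite ?sub0set ?sub1set ?subxx ?set21 ?set22.
have -> : H = (if a \in H then [set a] else set0) :|: (if b \in H then [set b] else set0).
  apply/setP => x; rewrite inE; apply/idP/idP => [xH|].
    by case/set2P: (subsetP sHab x xH) => ex; rewrite -ex xH !inE eqxx ?orbT.
  by case/orP; case: ifP => hH; rewrite inE // => /eqP ->.
by case: ifP => _; case: ifP => _; rewrite ?set0U ?setU0 eqxx ?orbT.
Qed.

Lemma sum_powerset_set2 (R : pzRingType) (T : finType) (a b : T) (F : {set T} -> R) :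
  a != b ->
  \sum_(H in powerset [set a; b]) (-1) ^+ #|H| * F H =
  F set0 - F [set a] - F [set b] + F [set a; b].
Proof.
move=> ab; have sep x (A B : {set T}) : x \in B -> x \notin A -> A != B.
  by move=> xB; apply: contraNneq => ->.
rewrite powerset_set2 -!setUA !big_setU1 ?big_set1 /= ?cards0 ?cards1 ?cards2 ?ab.
- by rewrite expr0 expr1 sqrrN expr1n !mul1r !mulN1r !addrA.
all: rewrite !inE ?negb_or; try apply/and3P; try apply/andP; repeat split.
all: try by apply: (sep a); rewrite !inE ?eqxx // eq_sym.
all: by apply: (sep b); rewrite !inE ?eqxx ?orbT // eq_sym.
Qed.

(* If [F H] linearises [x^H p(x)], this linearises [(1 - x_f)(1 - x_g) p(x)]. *)
Definition lin_compl2 (R : pzRingType) (T : finType) (f g : T) (F : {set T} -> R) : R :=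
  F set0 - F [set f] - F [set g] + F [set f; g].

Section SheraliAdams.

Variables (R : realFieldType) (n I : finType) (A : I -> n -> R) (b : I -> R).
Variables (psi : nat) (y : {set n} -> R).
Hypothesis Hy : SA_lifted A b psi y.

Lemma SA_lifted_ge0 (G : {set n}) : (#|G| <= psi)%N -> 0 <= y G.
Proof.
move=> hG; have [_ /(_ G set0)] := Hy.
rewrite -setI_eq0 setI0 cards0 addn0 eqxx => /(_ isT hG) [_].
by rewrite powerset0 big_set1 cards0 expr0 mul1r setU0.
Qed.

Lemma SA_lifted_row (G : {set n}) (i : I) : (#|G| <= psi)%N ->
  0 <= b i * y G - \sum_j A i j * y (G :|: [set j]).
Proof.
move=> hG; have [_ /(_ G set0)] := Hy.
rewrite -setI_eq0 setI0 cards0 addn0 eqxx => /(_ isT hG) [/(_ i) + _].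
by rewrite powerset0 big_set1 cards0 expr0 mul1r setU0.
Qed.

Lemma SA_lifted_row_compl2 (f g : n) (i : I) : (2 <= psi)%N -> f != g ->
  0 <= b i * lin_compl2 f g y - \sum_j A i j * lin_compl2 f g (fun H => y (H :|: [set j])).
Proof.
move=> psi2 fg; have [_ /(_ set0 [set f; g])] := Hy.
rewrite -setI_eq0 set0I cards0 cards2 fg eqxx => /(_ isT psi2) [/(_ i) + _].
rewrite sum_powerset_set2 // !set0U /lin_compl2.
under [X in _ <= _ - X]eq_bigr => j _ do rewrite mulrDr !mulrBr.
rewrite big_split !sumrB /=; lra.
Qed.

Lemma SA_lifted_pair_le0 (f g : n) (i : I) : (2 <= psi)%N -> f != g ->
  b i = 1 -> A i f = 1 -> A i g = 1 -> (forall j, 0 <= A i j) -> y [set f; g] <= 0.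
Proof.
move=> psi2 fg bi Af Ag A_ge0.
have := @SA_lifted_row [set f] i; rewrite cards1 => /(_ (ltnW psi2)).
rewrite (bigD1 f) // (bigD1 g) 1?eq_sym //= setUid bi Af Ag !mul1r.
have : 0 <= \sum_(j | (j != f) && (j != g)) A i j * y ([set f] :|: [set j]).
  apply: sumr_ge0 => j _; rewrite mulr_ge0 // SA_lifted_ge0 //.
  by apply: leq_trans _ psi2; rewrite cards2 ltnS leq_b1.
lra.
Qed.

End SheraliAdams.

Section LiftedColourMatching.

Variables (R : realFieldType) (V E : finType) (k : nat).
Variables (ends : E -> {set V}) (col : E -> 'I_k) (y : {set E} -> R).
Hypothesis Hy : SA_lifted (Mc_A R ends col) (@Mc_b R V E k) 2 y.

Lemma sum_Mc_A_nonneg_row (e : E) (F : E -> R) :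
  \sum_j Mc_A R ends col (inr (inl e)) j * F j = - F e.
Proof.
rewrite (bigD1 e) //= eqxx mulN1r big1 ?addr0 // => j /negbTE ->.
by rewrite mul0r.
Qed.

Lemma Mc_lifted_setU1_ge0 (G : {set E}) (e : E) :
  (#|G| <= 2)%N -> 0 <= y (G :|: [set e]).
Proof.
move=> hG; have := SA_lifted_row Hy (inr (inl e)) hG.
by rewrite sum_Mc_A_nonneg_row /= mul0r sub0r opprK.
Qed.

Lemma Mc_lin_compl2_setU1_ge0 (f g e : E) : f != g ->
  0 <= lin_compl2 f g (fun H => y (H :|: [set e])).
Proof.
move=> fg; have := SA_lifted_row_compl2 Hy (inr (inl e)) (leqnn 2) fg.
by rewrite sum_Mc_A_nonneg_row /= mul0r sub0r opprK.
Qed.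

Lemma Mc_lifted_adjacent_le0 (e e' : E) (v : V) : e != e' ->
  v \in ends e -> v \in ends e' -> y [set e; e'] <= 0.
Proof.
move=> ee' ve ve'; apply: (SA_lifted_pair_le0 Hy (i := inl (inl v))) => //=.
- by rewrite ve.
- by rewrite ve'.
- by move=> j; case: ifP.
Qed.

Lemma Mc_lifted_same_colour_le0 (e e' : E) : e != e' -> col e = col e' ->
  y [set e; e'] <= 0.
Proof.
move=> ee' c; apply: (SA_lifted_pair_le0 Hy (i := inl (inr (col e)))) => //=.
- by rewrite eqxx.
- by rewrite c eqxx.
- by move=> j; case: ifP.
Qed.

Lemma Mc_lin_compl2_colour_class (f g e e' : E) : f != g -> e != e' -> col e = col e' ->
  lin_compl2 f g (fun H => y (H :|: [set e])) + lin_compl2 f g (fun H => y (H :|: [set e']))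
  <= lin_compl2 f g y.
Proof.
move=> fg ee' c; have := SA_lifted_row_compl2 Hy (inl (inr (col e))) (leqnn 2) fg.
rewrite (bigD1 e) // (bigD1 e') 1?eq_sym //= c eqxx !mul1r.
set rest := \sum_(j | _) _.
have : 0 <= rest.
  apply: sumr_ge0 => j _; apply: mulr_ge0; first by case: ifP.
  exact: Mc_lin_compl2_setU1_ge0.
lra.
Qed.

Lemma Mc_lin_compl2_setU1_ge (f g e : E) : y [set f; e] <= 0 -> y [set g; e] <= 0 ->
  y [set e] <= lin_compl2 f g (fun H => y (H :|: [set e])).
Proof.
move=> fe ge; have := @Mc_lifted_setU1_ge0 [set f; g] e.
rewrite /lin_compl2 set0U cards2 ltnS leq_b1 => /(_ isT); lra.
Qed.

End LiftedColourMatching.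

Lemma bichromatic_4cycle_uniq (V E : finType) (k : nat) (ends : E -> {set V})
    (col : E -> 'I_k) (e1 e3 e2 e4 : E) :
  bichromatic_4cycle ends col e1 e3 e2 e4 -> uniq [:: e1; e3; e2; e4].
Proof.
case=> v1 [v2 [v3 [v4 [[uv h1 h3 h2 h4] [c12 c34 c13]]]]].
move: uv; rewrite /= !inE !negb_or => /and4P [/and3P [n12 n13 n14] /andP [n23 n24] _ _].
have ne_col e e' : col e != col e' -> e != e' by apply: contraNneq => ->.
have ne_ends e e' v : v \in ends e -> v \notin ends e' -> e != e'.
  by move=> ve; apply: contraNneq => <-.
rewrite andbT; apply/and3P; split; [apply/and3P; split | apply/andP; split |].
- exact: ne_col.
- by apply: (ne_ends _ _ v1); rewrite ?h1 ?h2 !inE ?eqxx // negb_or n13.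
- by apply: ne_col; rewrite -c34.
- by apply: ne_col; rewrite -c12 eq_sym.
- by apply: (ne_ends _ _ v2); rewrite ?h3 ?h4 !inE ?eqxx // negb_or n24 eq_sym.
- by apply: ne_col; rewrite -c12 -c34.
Qed.

Theorem mainTheorem6 (R : realFieldType) (V E : finType) (k : nat)
  (ends : E -> {set V}) (col : E -> 'I_k)
  (hends : forall e : E, #|ends e| = 2%N)
  (x : E -> R)
  (hx : SA_level (Mc_A R ends col) (@Mc_b R V E k) 2 x) :
  forall e1 e3 e2 e4 : E, bichromatic_4cycle ends col e1 e3 e2 e4 ->
    x e1 + x e3 + x e2 + x e4 <= 1.
Proof.
move=> e1 e3 e2 e4 cyc; have [y [Hy xE]] := hx; rewrite !xE.
have := bichromatic_4cycle_uniq cyc; rewrite /= !inE !negb_or andbT.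
move=> /and3P [/and3P [d13 d12 d14] /andP [d32 d34] d24].
have [v1 [v2 [v3 [v4 [[_ h1 h3 h2 h4] [c12 c34 _]]]]]] := cyc.
have y31 : y [set e3; e1] <= 0.
  by apply: (Mc_lifted_adjacent_le0 Hy (v := v2)); rewrite ?h3 ?h1 ?set21 ?set22 // eq_sym.
have y41 : y [set e4; e1] <= 0.
  by apply: (Mc_lifted_adjacent_le0 Hy (v := v1)); rewrite ?h4 ?h1 ?set21 ?set22 // eq_sym.
have y32 : y [set e3; e2] <= 0.
  by apply: (Mc_lifted_adjacent_le0 Hy (v := v3)); rewrite ?h3 ?h2 ?set21 ?set22.
have y42 : y [set e4; e2] <= 0.
  by apply: (Mc_lifted_adjacent_le0 Hy (v := v4)); rewrite ?h4 ?h2 ?set21 ?set22 // eq_sym.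
have y34 := Mc_lifted_same_colour_le0 Hy d34 c34.
have := Mc_lin_compl2_colour_class Hy d34 d12 c12.
have := Mc_lin_compl2_setU1_ge Hy y31 y41.
have := Mc_lin_compl2_setU1_ge Hy y32 y42.
rewrite /lin_compl2 Hy.1; lra.
Qed.
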